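(* Let $p$ be a prime, $R=\mathbb Z_{(p)}$ the localization of $\mathbb Z$ at $(p)$, and $\mathbb Z(p^\infty)=\mathbb Q/R$ the Prüfer group. Then the elements $\left(\frac{1}{p^{nt}}+R\right)_{n\ge1}$, $t\in\mathbb N^*$, of $(\mathbb Z(p^\infty))^{\mathbb N^*}$ are free generators of a free abelian subgroup of infinite rank; consequently $\mathbb Q\oplus(\mathbb Z(p^\infty))^{\mathbb N^*}\cong(\mathbb Z(p^\infty))^{\mathbb N^*}$ as $R$-modules. (Here $\mathbb Q$ and $\mathbb Z(p^\infty)$ are uniserial $R$-modules with local endomorphism rings, $[\mathbb Q]_m\neq[\mathbb Z(p^\infty)]_m$ and $[\mathbb Q]_e\ne[\mathbb Z(p^\infty)]_e$, so no bijections $\mathbb N\to\mathbb N^*$ preserve monogeny or epigeny classes between the families $\{\mathbb Q,\mathbb Z(p^\infty),\mathbb Z(p^\infty),\dots\}$ and $\{\mathbb Z(p^\infty),\mathbb Z(p^\infty),\dots\}$.)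
   Context: $\mathbb N^*$ denotes the set of positive integers. $[M]_m=[N]_m$ means there exist monomorphisms $M\to N$, $N\to M$; $[M]_e=[N]_e$ means there exist epimorphisms $M\to N$, $N\to M$. *)

From HB Require Import structures.
From mathcomp Require Import all_boot all_order all_algebra.
Set Implicit Arguments. Unset Strict Implicit. Unset Printing Implicit Defensive.
Import Order.TTheory GRing.Theory Num.Theory.
Local Open Scope ring_scope.

(* R = Z_(p) inside Q: rationals whose reduced denominator is prime to p. *)
Definition inR (p : nat) (q : rat) : bool := ~~ (p %| `|denq q|)%N.

(* Z(p^oo) = Q / R, represented by rational representatives:
   a and b represent the same element iff a - b \in R. *)
Definition pequiv (p : nat) (a b : rat) : Prop := inR p (a - b).

(* (Z(p^oo))^{N*}: sequences of representatives; index k : nat stands for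
   n = k+1 \in N*.  Equality is componentwise equality in Q/R. *)
Definition seqequiv (p : nat) (s s' : nat -> rat) : Prop :=
  forall k, pequiv p (s k) (s' k).

Definition srcequiv (p : nat) (u v : rat * (nat -> rat)) : Prop :=
  u.1 = v.1 /\ seqequiv p u.2 v.2.

Definition xgen (p t : nat) : nat -> rat :=
  fun k => ((p%:R : rat) ^+ (k.+1 * t))^-1.

(* f (on representatives) induces an R-module isomorphism
   Q (+) (Z(p^oo))^{N*} -> (Z(p^oo))^{N*}: well defined, additive,
   R-linear, injective and surjective on the quotients. *)
Definition Rmod_iso (p : nat) (f : rat * (nat -> rat) -> nat -> rat) : Prop :=
  [/\ (forall u v, srcequiv p u v -> seqequiv p (f u) (f v)),
      (forall u v, seqequiv p (f (u.1 + v.1, fun k => u.2 k + v.2 k))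
                              (fun k => f u k + f v k)),
      (forall r u, inR p r ->
          seqequiv p (f (r * u.1, fun k => r * u.2 k)) (fun k => r * f u k)),
      (forall u v, seqequiv p (f u) (f v) -> srcequiv p u v)
    & (forall y, exists u, seqequiv p (f u) y)].

From HB Require Import structures.
From mathcomp Require Import all_boot all_order all_algebra.
From mathcomp Require Import ring boolp classical_sets functions.
From Stdlib Require Cantor.
Import Order.TTheory GRing.Theory Num.Theory.
Local Open Scope ring_scope.

(* Independence: in a relation [sum_(t <= N) c_t x_t = 0], scale the coordinate
   [k = |c_N|] by [p^((k+1)N)]; the lower terms become integers and what is left
   is [c_N / p^(k+1)], which lies in [R] only if [c_N = 0].
   Isomorphism: by Zorn's lemma there is a Q-linear functional [rho] on [Q^N]
   vanishing on [R^N] with [rho x_1 = 1]; it is well defined on [(Q/R)^N], and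
   adding a multiple of [x_1] to a sequence sets its [rho]-value at will.  Cut a
   sequence into countably many blocks [y_0, y_1, ...] by Cantor pairing and send
   [(q, y)] to the sequence whose block [j] is [y_j] corrected so that its
   [rho]-value is [q] for [j = 0] and [rho y_(j-1)] otherwise: a Hilbert hotel
   that absorbs the summand [Q]. *)

Section FunctionalExtension.
Local Open Scope classical_set_scope.
Variables (F : fieldType) (V : lmodType F) (W : set V) (v : V).
Hypotheses (W0 : W 0) (WD : forall x y, W x -> W y -> W (x + y))
  (WZ : forall a x, W x -> W (a *: x)) (Wv : ~ W v).

Definition avoiding (A : set V) :=
  [/\ W `<=` A, (forall x y, A x -> A y -> A (x + y)),
      (forall a x, A x -> A (a *: x)) & ~ A v].

Lemma avoiding_bigcup (C : set (set V)) :
  C `<=` [set A | A = set0 \/ avoiding A] -> total_on C subset ->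
  \bigcup_(A in C) A = set0 \/ avoiding (\bigcup_(A in C) A).
Proof.
move=> Cav Ctot; have [[A0 [CA0 avA0]]|noav] := pselect (exists A, C A /\ avoiding A).
  right; have avC A x : C A -> A x -> avoiding A.
    by move=> CA Ax; case: (Cav A CA) => // A_0; move: Ax; rewrite A_0.
  split.
  - by move=> x Wx; exists A0 => //; case: avA0 => + _ _ _; apply.
  - move=> x y [A CA Ax] [B CB By].
    have [AB|BA] := Ctot _ _ CA CB.
      by exists B => //; case: (avC _ _ CB By) => _ + _ _; apply => //; apply: AB.
    by exists A => //; case: (avC _ _ CA Ax) => _ + _ _; apply => //; apply: BA.
  - by move=> a x [A CA Ax]; exists A => //; case: (avC _ _ CA Ax) => _ _ + _; apply.
  - by move=> [A CA Av]; case: (avC _ _ CA Av).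
left; apply/seteqP; split => // x [A CA Ax].
by case: (Cav A CA) => [A_0|avA]; [move: Ax; rewrite A_0 | case: noav; exists A].
Qed.

Lemma maximal_avoiding :
  exists M, avoiding M /\ forall x, exists a, M (x - a *: v).
Proof.
have [M [avM Mmax]] : exists M, avoiding M /\ forall B, M `<` B -> ~ avoiding B.
  have [M [PM Mmax]] := Zorn_bigcup avoiding_bigcup.
  case: PM => [M_0|avM].
    exfalso; apply: (Mmax W); last by right; split.
    by rewrite M_0; split => // /(_ 0 W0).
  by exists M; split => // B MB avB; apply: (Mmax B MB); right.
exists M; split => // x; apply: contrapT => noa.
have [WM MD MZ Mv] := avM.
pose B := [set m + d *: x | m in M & d in [set: F]].
apply: (Mmax B).
  split=> [m Mm|MB]; first by exists m => //; exists 0 => //; rewrite scale0r addr0.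
  apply: noa; exists 0; rewrite scale0r subr0; apply: MB.
  by exists 0; [exact: WM | exists 1 => //; rewrite add0r scale1r].
split.
- by move=> w Ww; exists w; [exact: WM | exists 0 => //; rewrite scale0r addr0].
- move=> _ _ [m1 Mm1 [d1 _ <-]] [m2 Mm2 [d2 _ <-]].
  exists (m1 + m2); first exact: MD.
  by exists (d1 + d2) => //; rewrite scalerDl addrACA.
- move=> a _ [m Mm [d _ <-]]; exists (a *: m); first exact: MZ.
  by exists (a * d) => //; rewrite scalerDr scalerA.
- move=> [m Mm [d _ vE]]; have [d0|dN0] := eqVneq d 0.
    by apply: Mv; rewrite -vE d0 scale0r addr0.
  apply: noa; exists d^-1; rewrite -vE scalerDr scalerA mulVf // scale1r.
  by rewrite opprD addrCA subrr addr0 -scaleNr; apply: (MZ).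
Qed.

Lemma exists_functional_vanishing : exists rho : V -> F,
  [/\ {morph rho : x y / x + y}, (forall a, {morph rho : x / a *: x >-> a * x}),
      (forall x, W x -> rho x = 0) & rho v = 1].
Proof.
have [M [[WM MD MZ Mv] Mcodim1]] := maximal_avoiding.
pose rho x := projT1 (cid (Mcodim1 x)).
have rhoP x : M (x - rho x *: v) by rewrite /rho; case: cid.
have rho_uniq x a : M (x - a *: v) -> rho x = a.
  move=> Ma; apply: contrapT => /eqP neq; apply: Mv.
  have -> : v = (rho x - a)^-1 *: ((x - a *: v) - (x - rho x *: v)).
    rewrite [x - _]addrC addrKA opprK [- _ + _]addrC -scalerBl.
    by rewrite scalerA mulVf ?subr_eq0 // scale1r.
  by apply: (MZ); apply: (MD) => //; rewrite -scaleN1r; apply: (MZ).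
exists rho; split.
- move=> x y; apply: rho_uniq.
  by rewrite scalerDl opprD addrACA; apply: (MD).
- move=> a x; apply: rho_uniq.
  by rewrite -scalerA -scalerBr; apply: (MZ).
- by move=> x Wx; apply: rho_uniq; rewrite scale0r subr0; apply: WM.
- by apply: rho_uniq; rewrite scale1r subrr; apply: WM.
Qed.

End FunctionalExtension.

Section LocalRing.
Variables (p : nat) (hp : prime p).
Local Notation P := (p%:R : rat).

Lemma inR_of_mul (x : rat) (a d : int) :
  ~~ (p %| `|d|)%N -> x * d%:~R = a%:~R -> inR p x.
Proof.
move=> pNd xd; apply/negP => p_den.
have /(congr1 absz) : numq x * d = a * denq x.
  by apply: (@intr_inj rat); rewrite !intrM numqE -xd mulrAC.
rewrite !abszM => e.
have : (p %| `|numq x| * `|d|)%N by rewrite e dvdn_mull.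
rewrite Euclid_dvdM // (negbTE pNd) orbF => p_num.
move/(coprime_dvdl p_num): (coprime_num_den x).
by rewrite prime_coprime // p_den.
Qed.

Lemma inR_int (z : int) : inR p z%:~R.
Proof. by rewrite /inR denq_int dvdn1 neq_ltn prime_gt1 ?orbT. Qed.

Lemma inR0 : inR p 0. Proof. exact: (inR_int 0). Qed.

Lemma inR_nat (n : nat) : inR p n%:R. Proof. exact: (inR_int n). Qed.

Lemma inRD x y : inR p x -> inR p y -> inR p (x + y).
Proof.
move=> pNx pNy.
apply: (@inR_of_mul _ (numq x * denq y + numq y * denq x) (denq x * denq y)).
  by rewrite abszM Euclid_dvdM // negb_or; apply/andP.
by rewrite intrD !intrM !numqE; ring.
Qed.

Lemma inRM x y : inR p x -> inR p y -> inR p (x * y).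
Proof.
move=> pNx pNy.
apply: (@inR_of_mul _ (numq x * numq y) (denq x * denq y)).
  by rewrite abszM Euclid_dvdM // negb_or; apply/andP.
by rewrite !intrM !numqE; ring.
Qed.

Lemma inRN x : inR p x -> inR p (- x).
Proof. by move=> px; rewrite -mulN1r inRM // (inR_int (-1)). Qed.

Lemma inRB x y : inR p x -> inR p y -> inR p (x - y).
Proof. by move=> px py; rewrite inRD ?inRN. Qed.

Lemma inR_sum (I : Type) (r : seq I) (Q : pred I) (F : I -> rat) :
  (forall i, Q i -> inR p (F i)) -> inR p (\sum_(i <- r | Q i) F i).
Proof. by move=> FR; apply: (big_ind (inR p)); [exact: inR0 | exact: inRD |]. Qed.

(* [|a| < p^(|a|+1)], so the fraction has negative [p]-adic valuation unless [a = 0]. *)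
Lemma inR_div_pexp (a : int) : inR p (a%:~R / P ^+ `|a|.+1) -> a = 0.
Proof.
set x := _ / _ => px.
have xP : x * (p ^ `|a|.+1)%:R = a%:~R.
  by rewrite natrX divfK // expf_neq0 // pnatr_eq0 -lt0n prime_gt0.
have /(congr1 absz) : a * denq x = numq x * (p ^ `|a|.+1)%N.
  by apply: (@intr_inj rat); rewrite !intrM -pmulrn numqE -xP mulrAC.
rewrite !abszM absz_nat => e.
have : (p ^ `|a|.+1 %| `|a| * `|denq x|)%N by rewrite e dvdn_mull.
rewrite Gauss_dvdl ?coprimeXl ?prime_coprime // => dvd_a.
apply/eqP; rewrite -absz_eq0; apply: contraLR dvd_a; rewrite -lt0n => a_gt0.
by rewrite gtnNdvd // (ltn_trans (ltnSn _)) // ltn_expl // prime_gt1.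
Qed.

Lemma natr_p_neq0 : P != 0. Proof. by rewrite pnatr_eq0 -lt0n prime_gt0. Qed.

Lemma inR_xgen_scaled (N t k : nat) :
  (1 <= t <= N)%N -> inR p (xgen p t k * P ^+ (k.+1 * N)).
Proof.
case/andP=> _ le_tN; rewrite /xgen -(subnKC le_tN) mulnDr exprD mulKf.
  by rewrite -natrX inR_nat.
by rewrite expf_neq0 // natr_p_neq0.
Qed.

Lemma xgen_top_coef_eq0 (N : nat) (c : nat -> int) :
  (forall k, inR p (\sum_(1 <= t < N.+2) (c t)%:~R * xgen p t k)) -> c N.+1 = 0.
Proof.
set k := `|c N.+1|%N => Rsum; apply: inR_div_pexp; rewrite -/k.
pose low := \sum_(1 <= t < N.+1) (c t)%:~R * xgen p t k.
have Rlow : inR p (low * P ^+ (k.+1 * N)).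
  rewrite /low mulr_suml big_nat inR_sum // => t le_tN.
  by rewrite -mulrA inRM ?inR_int ?inR_xgen_scaled.
have -> : (c N.+1)%:~R / P ^+ k.+1 =
    (low + (c N.+1)%:~R * xgen p N.+1 k) * P ^+ (k.+1 * N) - low * P ^+ (k.+1 * N).
  rewrite /xgen mulnS exprD; field; by rewrite !expf_neq0 // natr_p_neq0.
have Rtop : inR p (low + (c N.+1)%:~R * xgen p N.+1 k).
  by rewrite /low -big_nat_recr.
by rewrite inRB // inRM // -natrX inR_nat.
Qed.

Lemma xgen_free (N : nat) (c : nat -> int) :
  seqequiv p (fun k => \sum_(1 <= t < N.+1) (c t)%:~R * xgen p t k) (fun=> 0) ->
  forall t, (1 <= t <= N)%N -> c t = 0.
Proof.
elim: N c => [|N IHN] c sum_eq0 t /andP[t_gt0 le_tN].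
  by move: (leq_trans t_gt0 le_tN).
have Rsum k : inR p (\sum_(1 <= t < N.+2) (c t)%:~R * xgen p t k).
  by have := sum_eq0 k; rewrite /pequiv subr0.
have cN : c N.+1 = 0 by exact: xgen_top_coef_eq0.
move: le_tN; rewrite leq_eqVlt => /predU1P[-> //|lt_tN].
apply: IHN; last by rewrite t_gt0.
by move=> k; have := sum_eq0 k; rewrite /pequiv big_nat_recr //= cN mul0r addr0.
Qed.

Definition Rseq_span : set (nat -> rat) :=
  [set a | exists2 n : nat, (0 < n)%N & forall i, inR p (n%:R * a i)].

Lemma Rseq_span0 : Rseq_span (fun=> 0).
Proof. by exists 1%N => // i; rewrite mulr0 inR0. Qed.

Lemma Rseq_spanD a b :
  Rseq_span a -> Rseq_span b -> Rseq_span (fun i => a i + b i).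
Proof.
move=> [m m_gt0 Ra] [n n_gt0 Rb]; exists (m * n)%N => [|i].
  by rewrite muln_gt0 m_gt0.
have -> : (m * n)%:R * (a i + b i) = n%:R * (m%:R * a i) + m%:R * (n%:R * b i).
  by rewrite natrM; ring.
by rewrite inRD // inRM // inR_nat.
Qed.

Lemma Rseq_spanZ c a : Rseq_span a -> Rseq_span (fun i => c * a i).
Proof.
move=> [n n_gt0 Ra]; exists (`|denq c| * n)%N => [|i].
  by rewrite muln_gt0 absz_gt0 denq_neq0.
rewrite natrM.
have -> : `|denq c|%:R = (denq c)%:~R :> rat by rewrite -[in RHS]absz_denq pmulrn.
have -> : (denq c)%:~R * n%:R * (c * a i) = (c * (denq c)%:~R) * (n%:R * a i) by ring.
by rewrite -numqE inRM ?inR_int.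
Qed.

Lemma xgen1_notin_Rseq_span : ~ Rseq_span (xgen p 1).
Proof.
move=> [n n_gt0 /(_ n)]; rewrite /xgen muln1 => Rn.
by move/(inR_div_pexp n%:Z)/eqP: Rn; rewrite eqz_nat (gtn_eqF n_gt0).
Qed.

Lemma exists_Rseq_functional : exists rho : (nat -> rat) -> rat,
  [/\ (forall a b, rho (fun k => a k + b k) = rho a + rho b),
      (forall c a, rho (fun k => c * a k) = c * rho a),
      (forall a, (forall k, inR p (a k)) -> rho a = 0)
    & rho (xgen p 1) = 1].
Proof.
have [||||rho [rhoD rhoZ rho_span rho_xgen]] :=
  @exists_functional_vanishing _ (nat -> rat^o : lmodType rat) Rseq_span (xgen p 1).
- exact: Rseq_span0.
- by move=> a b; apply: Rseq_spanD.
- by move=> c a; apply: Rseq_spanZ.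
- exact: xgen1_notin_Rseq_span.
exists rho; split=> [a b|c a|a Ra|//]; [exact: rhoD | exact: rhoZ |].
by apply: rho_span; exists 1%N => // i; rewrite mul1r.
Qed.

End LocalRing.

Section RmodIso.
Variables (p : nat) (hp : prime p) (f : rat * (nat -> rat) -> nat -> rat).
Hypotheses
  (fD : forall u v k, f (u.1 + v.1, fun k => u.2 k + v.2 k) k = f u k + f v k)
  (fZ : forall c u k, f (c * u.1, fun k => c * u.2 k) k = c * f u k)
  (f_kernel : forall w,
     (forall k, inR p (f w k)) <-> w.1 = 0 /\ forall k, inR p (w.2 k))
  (f_onto : forall y, exists u, forall k, f u k = y k).

Let fB u v k : f (u.1 - v.1, fun k => u.2 k - v.2 k) k = f u k - f v k.
Proof.
rewrite -[- f v k]mulN1r -fZ -fD /=.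
by congr f; congr pair; [|apply: funext => i]; rewrite mulN1r.
Qed.

Lemma Rmod_iso_of_linear : Rmod_iso p f.
Proof.
split.
- move=> u v [eq1 eq2] k; rewrite /pequiv -fB; move: k; apply/f_kernel.
  by split=> //=; rewrite eq1 subrr.
- by move=> u v k; rewrite /pequiv fD subrr inR0.
- by move=> c u _ k; rewrite /pequiv fZ subrr inR0.
- move=> u v fuv; have [/= /eqP] : (u.1 - v.1 = 0) /\ forall k, inR p (u.2 k - v.2 k).
    by apply/(f_kernel (_, fun k => u.2 k - v.2 k)) => k; rewrite fB; apply: fuv.
  by rewrite subr_eq0 => /eqP.
- by move=> y; have [u fu] := f_onto y; exists u => k; rewrite /pequiv fu subrr inR0.
Qed.

End RmodIso.

Section ShiftIso.
Variables (p : nat) (hp : prime p) (rho : (nat -> rat) -> rat).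
Hypotheses (rhoD : forall a b, rho (fun k => a k + b k) = rho a + rho b)
  (rhoZ : forall c a, rho (fun k => c * a k) = c * rho a)
  (rho_R : forall a, (forall k, inR p (a k)) -> rho a = 0)
  (rho_xgen : rho (xgen p 1) = 1).

Local Arguments Cantor.to_nat : simpl never.

Definition block (y : nat -> rat) (j : nat) : nat -> rat :=
  fun i => y (Cantor.to_nat (j, i)).

Definition rho_seq (u : rat * (nat -> rat)) (j : nat) : rat :=
  if j is j'.+1 then rho (block u.2 j') else u.1.

Definition shift_map (u : rat * (nat -> rat)) : nat -> rat := fun k =>
  let j := (Cantor.of_nat k).1 in
  u.2 k + (rho_seq u j - rho_seq u j.+1) * xgen p 1 (Cantor.of_nat k).2.

Definition unshift_map (y : nat -> rat) : rat * (nat -> rat) :=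
  (rho (block y 0), fun k => let j := (Cantor.of_nat k).1 in
    y k + (rho (block y j.+1) - rho (block y j)) * xgen p 1 (Cantor.of_nat k).2).

Lemma rho_shift_xgen a c : rho (fun i => a i + c * xgen p 1 i) = rho a + c.
Proof. by rewrite rhoD rhoZ rho_xgen mulr1. Qed.

Lemma rho_block_shift_map u j : rho (block (shift_map u) j) = rho_seq u j.
Proof.
rewrite /block /shift_map; under eq_fun do rewrite Cantor.cancel_of_to /=.
by rewrite rho_shift_xgen addrC subrK.
Qed.

Lemma rho_seq_unshift_map y j : rho_seq (unshift_map y) j = rho (block y j).
Proof.
case: j => //= j; rewrite /block /=.
under eq_fun do rewrite Cantor.cancel_of_to /=.
by rewrite rho_shift_xgen addrC subrK.
Qed.

Lemma shift_mapK y k : shift_map (unshift_map y) k = y k.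
Proof. by rewrite /shift_map !rho_seq_unshift_map /=; ring. Qed.

Lemma shift_map_rho_seq0 u :
  (forall j, rho_seq u j = 0) -> forall k, shift_map u k = u.2 k.
Proof. by move=> u0 k; rewrite /shift_map !u0 subrr mul0r addr0. Qed.

Lemma shift_map_kernel w :
  (forall k, inR p (shift_map w k)) <-> w.1 = 0 /\ forall k, inR p (w.2 k).
Proof.
split=> [Rw | [w1 Rw2]].
  have w0 j : rho_seq w j = 0.
    by rewrite -rho_block_shift_map; apply: rho_R => i; apply: Rw.
  by split=> [|k]; [exact: (w0 0%N) | rewrite -shift_map_rho_seq0].
have w0 j : rho_seq w j = 0 by case: j => //= j; apply: rho_R => i; apply: Rw2.
by move=> k; rewrite shift_map_rho_seq0.
Qed.

Lemma shift_map_iso : Rmod_iso p shift_map.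
Proof.
apply: Rmod_iso_of_linear => //.
- move=> u v k; rewrite /shift_map; case: (Cantor.of_nat k).1 => [|j] /=;
  rewrite /block !rhoD; ring.
- move=> c u k; rewrite /shift_map; case: (Cantor.of_nat k).1 => [|j] /=;
  rewrite /block !rhoZ; ring.
- exact: shift_map_kernel.
- by move=> y; exists (unshift_map y); exact: shift_mapK.
Qed.

End ShiftIso.

Theorem mainTheorem8 (p : nat) (hp : prime p) :
  (forall (N : nat) (c : nat -> int),
      seqequiv p (fun k => \sum_(1 <= t < N.+1) (c t)%:~R * xgen p t k)
                 (fun _ => 0) ->
      forall t, (1 <= t <= N)%N -> c t = 0)
  /\
  (exists f : rat * (nat -> rat) -> nat -> rat, Rmod_iso p f).
Proof.
split; first exact: xgen_free.
have [rho [rhoD rhoZ rho_R rho_xgen]] := exists_Rseq_functional p hp.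
by exists (shift_map p rho); exact: (shift_map_iso _ hp _ rhoD rhoZ rho_R rho_xgen).
Qed.
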